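(* Let $T$ be a finite rooted tree with root $v_0$ and leaves identified with classes $1,\dots,K$; identify each non-root node $v_j$ with the set of classes in its subtree, let $p(j)$ be the parent of $v_j$, $d(j)$ its depth, and $a(y)$ the set of non-root nodes on the path from leaf $y$ to the root (including the leaf). Fix $\alpha>0$ and define, for a probability vector $f=(f_1,\dots,f_K)$ with positive entries and label $y$, the hierarchical cross-entropy $$\mathcal L_{\mathrm{HXE}}(f,y)=-\sum_{j\in a(y)} e^{-\alpha d(j)}\log\Big(\frac{\sum_{k\in v_j} f_k}{\sum_{k\in v_{p(j)}} f_k}\Big).$$ Then $\mathcal L_{\mathrm{HXE}}$ can be written in the form $-\sum_{j\in a(y)} w_j\log\big(\sum_{k\in v_j} f_k\big)$ with weights $w_j>0$ on non-root nodes forming a balanced weighted tree (i.e. $\sum_{j\in a(k)} w_j$ is the same for all classes $k$), and consequently $\mathcal L_{\mathrm{HXE}}$ is a proper scoring rule.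
   Context: Proper scoring rule: a loss $\mathcal L(f,y)$ on probability vectors over $K$ classes is proper if, for every label distribution $\pi$, $\sum_k\pi_k\mathcal L(f,k)$ is minimized over the simplex at $f=\pi$. *)

From HB Require Import structures.
From mathcomp Require Import all_boot all_order all_algebra.
From mathcomp Require Import all_classical all_reals all_analysis.
Set Implicit Arguments. Unset Strict Implicit. Unset Printing Implicit Defensive.
Import Order.TTheory GRing.Theory Num.Theory.
Local Open Scope ring_scope.

Definition is_rooted_tree (V : finType) (r : V) (par : V -> V) : Prop :=
  par r = r /\
  (forall v : V, exists n, iter n par v = r).

(* u is an ancestor of v (or v itself): u is reached from v by parent steps.
   In a tree the path to the root has fewer than #|V| steps. *)
Definition anc (V : finType) (par : V -> V) (u v : V) : bool :=
  has (fun n => iter n par v == u) (iota 0 #|V|).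

Definition depth (V : finType) (r : V) (par : V -> V) (v : V) : nat :=
  find (fun n => iter n par v == r) (iota 0 #|V|).

Definition is_leaf (V : finType) (r : V) (par : V -> V) (v : V) : bool :=
  ~~ [exists u, (u != r) && (par u == v)].

Definition leaves_are_classes (V : finType) (r : V) (par : V -> V) (K : nat)
  (leaf : 'I_K -> V) : Prop :=
  injective leaf /\ (forall v, is_leaf r par v <-> exists k, leaf k = v).

Definition cls (V : finType) (par : V -> V) (K : nat) (leaf : 'I_K -> V)
  (v : V) : {set 'I_K} := [set k | anc par v (leaf k)].

Definition apath (V : finType) (r : V) (par : V -> V) (K : nat)
  (leaf : 'I_K -> V) (y : 'I_K) : {set V} :=
  [set j | (j != r) && anc par j (leaf y)].

Definition node_mass (R : realType) (V : finType) (par : V -> V) (K : nat)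
  (leaf : 'I_K -> V) (f : 'I_K -> R) (v : V) : R :=
  \sum_(k in cls par leaf v) f k.

Definition L_HXE (R : realType) (V : finType) (r : V) (par : V -> V) (K : nat)
  (leaf : 'I_K -> V) (alpha : R) (f : 'I_K -> R) (y : 'I_K) : R :=
  - \sum_(j in apath r par leaf y)
      expR (- (alpha * (depth r par j)%:R)) *
      ln (node_mass par leaf f j / node_mass par leaf f (par j)).

Definition prob_vec (R : realType) (K : nat) (p : 'I_K -> R) : Prop :=
  (forall k, 0 <= p k) /\ \sum_k p k = 1.

Definition pos_prob_vec (R : realType) (K : nat) (p : 'I_K -> R) : Prop :=
  (forall k, 0 < p k) /\ \sum_k p k = 1.

Definition proper_scoring_rule (R : realType) (K : nat) (L : ('I_K -> R) -> 'I_K -> R) : Prop :=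
  forall pi : 'I_K -> R, prob_vec pi ->
  forall f : 'I_K -> R, pos_prob_vec f ->
    \sum_k pi k * L pi k <= \sum_k pi k * L f k.

(* Summation by parts along the path from leaf y to the root turns the
   hierarchical cross-entropy into -sum_(j in a(y)) w_j log m_f(j), where m_f(j) is
   the mass of node j, w_j = e^(-alpha d(j)) at leaves and
   e^(-alpha d(j)) (1 - e^(-alpha)) at inner nodes; the boundary term is a multiple
   of log m_f(root) = log 1 = 0.  Telescoping a constant instead shows that every
   leaf-to-root sum of the w_j equals e^(-alpha).  For any such balanced weighting
   the expected loss under pi is -sum_j w_j m_pi(j) log m_f(j), while
   sum_j w_j m_f(j) takes the same value for every probability vector f, so
   Gibbs' inequality x log (y / x) <= y - x, applied node by node, gives propriety. *)

From HB Require Import structures.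
From mathcomp Require Import all_boot all_order all_algebra.
From mathcomp Require Import all_classical all_reals all_analysis.
From mathcomp Require Import ring lra.
Import Order.TTheory GRing.Theory Num.Theory.
Local Open Scope ring_scope.
Set Implicit Arguments. Unset Strict Implicit.

Section RootedTree.
Variables (V : finType) (r : V) (par : V -> V).
Hypothesis tree : is_rooted_tree r par.
Local Notation depth := (depth r par).

Lemma iter_root n : iter n par r = r.
Proof. by case: tree => par_r _; elim: n => //= n ->. Qed.

Lemma depth_spec v :
  [/\ iter (depth v) par v = r, (depth v < #|V|)%N &
      forall i, (i < depth v)%N -> iter i par v != r].
Proof.
have [n vr] := tree.2 v.
have v_to_r : fconnect par v r by rewrite -vr fconnect_iter.
have reach : has (fun n => iter n par v == r) (iota 0 #|V|).
  apply/hasP; exists (findex par v r); last by rewrite iter_findex.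
  by rewrite mem_iota (leq_trans (findex_max v_to_r)) ?max_card.
have lt_depth : (depth v < #|V|)%N by move: reach; rewrite has_find size_iota.
split=> //; first by move: (nth_find 0 reach); rewrite nth_iota // => /eqP.
move=> i lt_i; move: (before_find 0 lt_i).
by rewrite nth_iota ?(ltn_trans lt_i) // => ->.
Qed.

Lemma iter_depth v : iter (depth v) par v = r.
Proof. by case: (depth_spec v). Qed.

Lemma depth_lt_card v : (depth v < #|V|)%N.
Proof. by case: (depth_spec v). Qed.

Lemma iter_lt_depth i v : (i < depth v)%N -> iter i par v != r.
Proof. by case: (depth_spec v) => _ _; apply. Qed.

Lemma depth_le n v : iter n par v = r -> (depth v <= n)%N.
Proof. by move=> vr; rewrite leqNgt; apply/negP => /iter_lt_depth; rewrite vr eqxx. Qed.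

Lemma iter_ge_depth n v : (depth v <= n)%N -> iter n par v = r.
Proof. by move=> le_n; rewrite -(subnK le_n) iterD iter_depth iter_root. Qed.

Lemma depth_gt0 v : (0 < depth v)%N = (v != r).
Proof.
rewrite lt0n; congr negb; apply/eqP/eqP => [d0|->]; first by rewrite -(iter_depth v) d0.
by apply/eqP; rewrite -leqn0 depth_le.
Qed.

Lemma depth_root : depth r = 0%N.
Proof. by apply/eqP; rewrite -leqn0 (@depth_le 0). Qed.

Lemma depth_par v : v != r -> depth v = (depth (par v)).+1.
Proof.
rewrite -depth_gt0 => pos; apply/eqP; rewrite eqn_leq; apply/andP; split.
  by apply: depth_le; rewrite iterSr iter_depth.
by rewrite -(prednK pos) ltnS depth_le // -iterSr prednK // iter_depth.
Qed.

Lemma depth_iter i v : (i <= depth v)%N -> depth (iter i par v) = (depth v - i)%N.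
Proof.
elim: i => [|i IH] lt_i; first by rewrite subn0.
have ne_r := iter_lt_depth lt_i.
by rewrite iterS subnS -(IH (ltnW lt_i)) (depth_par ne_r).
Qed.

Lemma ancP u v : reflect (exists n, iter n par v = u) (anc par u v).
Proof.
apply: (iffP hasP) => [[n _ /eqP]|[n vu]]; first by exists n.
have [le_n|lt_n] := leqP (depth v) n.
  exists (depth v); first by rewrite mem_iota depth_lt_card.
  by rewrite iter_depth -vu iter_ge_depth.
exists n; first by rewrite mem_iota (ltn_trans lt_n (depth_lt_card v)).
by rewrite vu.
Qed.

Lemma anc_par u v : anc par u v -> anc par (par u) v.
Proof. by move=> /ancP[n vu]; apply/ancP; exists n.+1; rewrite iterS vu. Qed.

Lemma anc_root v : anc par r v.
Proof. by apply/ancP; exists (depth v); rewrite iter_depth. Qed.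

Lemma par_leafN u : u != r -> ~~ is_leaf r par (par u).
Proof. by move=> ur; apply/negPn/existsP; exists u; rewrite ur eqxx. Qed.

Lemma par_last_step v : v != r -> par (iter (depth v).-1 par v) = r.
Proof. by rewrite -depth_gt0 => pos; rewrite -iterS prednK ?iter_depth. Qed.

Lemma root_leafN v : v != r -> ~~ is_leaf r par r.
Proof.
move=> vr; have lt_last : ((depth v).-1 < depth v)%N by rewrite prednK ?depth_gt0.
by move: (par_leafN (iter_lt_depth lt_last)); rewrite par_last_step.
Qed.

Lemma big_apath (R : Type) (idx : R) (op : Monoid.com_law idx) K
    (leaf : 'I_K -> V) y (F : V -> R) :
  \big[op/idx]_(j in apath r par leaf y) F j =
  \big[op/idx]_(i < depth (leaf y)) F (iter i par (leaf y)).
Proof.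
set D := depth (leaf y).
have -> : apath r par leaf y = [set iter i par (leaf y) | i : 'I_D].
  apply/setP => j; rewrite inE; apply/andP/imsetP => [[jr /ancP[n yj]]|[i _ ->]].
    have lt_n : (n < D)%N by rewrite ltnNge; apply: contra jr => /iter_ge_depth; rewrite yj => ->.
    by exists (Ordinal lt_n).
  by split; [exact: iter_lt_depth | apply/ancP; exists i].
rewrite big_imset /=; first by apply: eq_bigl => i; rewrite inE.
move=> i k _ _ /(congr1 depth)/eqP.
have [le_i le_k] := (ltnW (ltn_ord i), ltnW (ltn_ord k)).
by rewrite !depth_iter // eqn_sub2lE // => /eqP/val_inj.
Qed.

End RootedTree.

Lemma summation_by_parts (R : comRingType) (c g : nat -> R) n :
  \sum_(i < n.+1) c i * (g i - g i.+1) =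
  c 0%N * g 0%N + \sum_(i < n) (c i.+1 - c i) * g i.+1 - c n * g n.+1.
Proof.
elim: n => [|n IH]; first by rewrite big_ord1 big_ord0 addr0 mulrBr.
by rewrite big_ord_recr /= IH big_ord_recr /=; ring.
Qed.

Lemma mul_ln_le_subr (R : realType) (a b : R) :
  0 < a -> 0 < b -> b * ln a - b * ln b <= a - b.
Proof.
move=> a_gt0 b_gt0; have ab_gt0 : 0 < a / b by rewrite divr_gt0.
have : ln (1 + (a / b - 1)) <= a / b - 1 by apply: le_ln1Dx; lra.
rewrite addrC subrK ln_div ?posrE // => /(ler_wpM2l (ltW b_gt0)).
by rewrite !mulrBr mulr1 mulrCA divff ?gt_eqF // mulr1.
Qed.

Lemma eq_proper_scoring_rule (R : realType) K (L L' : ('I_K -> R) -> 'I_K -> R) :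
  (forall g y, prob_vec g -> 0 < g y -> L g y = L' g y) ->
  proper_scoring_rule L' -> proper_scoring_rule L.
Proof.
move=> eqL properL' pi pi_prob f f_pos.
have f_prob : prob_vec f by split=> [k|]; [exact/ltW/f_pos.1 | exact: f_pos.2].
have expected_eq g : prob_vec g -> (forall k, 0 < pi k -> 0 < g k) ->
    \sum_k pi k * L g k = \sum_k pi k * L' g k.
  move=> g_prob g_pos; apply: eq_bigr => k _.
  have [pi_k_gt0|pi_k_le0] := ltrP 0 (pi k); first by rewrite eqL ?g_pos.
  have -> : pi k = 0 by apply/eqP; rewrite eq_le pi_k_le0 pi_prob.1.
  by rewrite !mul0r.
by rewrite !expected_eq //; [exact: properL' | move=> k _; exact: f_pos.1].
Qed.

Section PathLoss.
Variables (R : realType) (V : finType) (r : V) (par : V -> V) (K : nat) (leaf : 'I_K -> V).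
Local Notation apath := (apath r par leaf).
Local Notation mass := (node_mass par leaf).

Definition path_loss (w : V -> R) (f : 'I_K -> R) (y : 'I_K) : R :=
  - \sum_(j in apath y) w j * ln (mass f j).

Definition balanced (w : V -> R) : Prop :=
  exists c : R, forall k : 'I_K, \sum_(j in apath k) w j = c.

Lemma node_mass_gt0 (f : 'I_K -> R) y j :
  (forall k, 0 <= f k) -> 0 < f y -> y \in cls par leaf j -> 0 < mass f j.
Proof.
move=> f_ge0 fy_gt0 y_in; rewrite /node_mass (bigD1 y) //=.
by rewrite ltr_pwDl ?sumr_ge0.
Qed.

Lemma exchange_apath_mass (g : 'I_K -> R) (F : V -> R) :
  \sum_k g k * \sum_(j in apath k) F j = \sum_(j | j != r) F j * mass g j.
Proof.
under eq_bigr do rewrite big_distrr big_mkcond /=.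
rewrite exchange_big /= [RHS]big_mkcond /=; apply: eq_bigr => j _.
have [->|jr] := eqVneq j r; first by rewrite big1 // => k _; rewrite inE eqxx.
rewrite /node_mass big_distrr /= [RHS]big_mkcond /=; apply: eq_bigr => k _.
by rewrite !inE jr /=; case: ifP; rewrite // mulrC.
Qed.

Lemma path_loss_proper (w : V -> R) :
  (forall j, j != r -> 0 <= w j) -> balanced w -> proper_scoring_rule (path_loss w).
Proof.
move=> w_ge0 [c w_bal] pi [pi_ge0 pi1] f [f_gt0 f1].
have expected_loss g : \sum_k pi k * path_loss w g k =
    - \sum_(j | j != r) w j * ln (mass g j) * mass pi j.
  by rewrite -exchange_apath_mass -sumrN; apply: eq_bigr => k _; rewrite mulrN.
have total_weight g : \sum_k g k = 1 -> \sum_(j | j != r) w j * mass g j = c.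
  move=> g1; rewrite -exchange_apath_mass.
  by under eq_bigr do rewrite w_bal; rewrite -big_distrl /= g1 mul1r.
have gibbs : \sum_(j | j != r) w j * ln (mass f j) * mass pi j -
              \sum_(j | j != r) w j * ln (mass pi j) * mass pi j <=
              \sum_(j | j != r) w j * mass f j - \sum_(j | j != r) w j * mass pi j.
  rewrite -!sumrB; apply: ler_sum => j jr.
  rewrite -!mulrA -!mulrBr ler_wpM2l ?w_ge0 //.
  have [mpi0|mpi_gt0] := eqVneq (mass pi j) 0.
    by rewrite mpi0 !mulr0 !subr0; apply: sumr_ge0 => k _; exact: ltW.
  suff mf_gt0 : 0 < mass f j.
    by rewrite ![ln _ * _]mulrC mul_ln_le_subr // lt_neqAle eq_sym mpi_gt0 sumr_ge0.
  move: mpi_gt0; case: (pickP (mem (cls par leaf j))) => [y y_in _|cls0].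
    by apply: (node_mass_gt0 _ (f_gt0 y)) => // k; exact: ltW.
  by rewrite /node_mass big_pred0 ?eqxx.
rewrite (total_weight _ f1) (total_weight _ pi1) subrr subr_le0 in gibbs.
by rewrite !expected_loss lerN2.
Qed.

End PathLoss.

Section HierarchicalCrossEntropy.
Variables (R : realType) (V : finType) (r : V) (par : V -> V) (K : nat) (leaf : 'I_K -> V).
Variable alpha : R.
Hypotheses (tree : is_rooted_tree r par) (leaves : leaves_are_classes r par leaf).
Local Notation apath := (apath r par leaf).
Local Notation mass := (node_mass par leaf).

Definition hxe_coef (j : V) : R := expR (- (alpha * (depth r par j)%:R)).

Definition hxe_weight (j : V) : R :=
  if is_leaf r par j then hxe_coef j else hxe_coef j * (1 - expR (- alpha)).

Lemma hxe_coef_par j : j != r -> hxe_coef j = hxe_coef (par j) * expR (- alpha).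
Proof. by move=> jr; rewrite /hxe_coef (depth_par tree jr) -natr1 mulrDr mulr1 opprD expRD. Qed.

Lemma hxe_weight_gt0 j : 0 < alpha -> 0 < hxe_weight j.
Proof.
move=> alpha_gt0; rewrite /hxe_weight /hxe_coef; case: ifP => _; first exact: expR_gt0.
by rewrite mulr_gt0 ?expR_gt0 // subr_gt0 expR_lt1 oppr_lt0.
Qed.

Lemma leaf_is_leaf y : is_leaf r par (leaf y).
Proof. by case: leaves => _ /(_ (leaf y)) [_ ->]; [|exists y]. Qed.

Lemma node_mass_root (f : 'I_K -> R) : mass f r = \sum_k f k.
Proof. by apply: eq_bigl => k; rewrite inE anc_root. Qed.

Lemma hxe_telescope (g : V -> R) y : leaf y != r ->
  \sum_(j in apath y) hxe_coef j * (g j - g (par j)) =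
  \sum_(j in apath y) hxe_weight j * g j - expR (- alpha) * g r.
Proof.
move=> yr; rewrite !big_apath //; have := depth_gt0 tree (leaf y); rewrite yr.
case D: (depth r par (leaf y)) => [//|n] _.
under eq_bigr do rewrite -iterS.
rewrite (summation_by_parts (fun i => hxe_coef (iter i par (leaf y)))
                           (fun i => g (iter i par (leaf y)))) big_ord_recl /=.
have last_r : par (iter n par (leaf y)) = r by rewrite -iterS -D iter_depth.
have coef_last : hxe_coef (iter n par (leaf y)) = expR (- alpha).
  have le_n : (n <= depth r par (leaf y))%N by rewrite D.
  by rewrite /hxe_coef (depth_iter tree le_n) D subSnn mulr1.
congr (_ + _ - _); first by rewrite /hxe_weight leaf_is_leaf.
  apply: eq_bigr => i _.
  have i_ne_r : iter i par (leaf y) != r by apply: (iter_lt_depth tree); rewrite D ltnS ltnW.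
  by rewrite /hxe_weight (negbTE (par_leafN par i_ne_r)) (hxe_coef_par i_ne_r); ring.
by rewrite coef_last last_r.
Qed.

Lemma L_HXE_path_loss (f : 'I_K -> R) y : prob_vec f -> 0 < f y ->
  L_HXE r par leaf alpha f y = path_loss r par leaf hxe_weight f y.
Proof.
move=> [f_ge0 f1] fy_gt0.
have [yr|yr] := eqVneq (leaf y) r.
  by rewrite /L_HXE /path_loss !big_apath // yr depth_root // !big_ord0.
have mass_gt0 j : anc par j (leaf y) -> 0 < mass f j.
  by move=> j_anc; apply: (node_mass_gt0 f_ge0 fy_gt0); rewrite inE.
rewrite /L_HXE (eq_bigr (fun j => hxe_coef j * (ln (mass f j) - ln (mass f (par j))))).
  by rewrite hxe_telescope // node_mass_root f1 ln1 mulr0 subr0.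
move=> j; rewrite inE => /andP[_ j_anc].
by rewrite ln_div // posrE mass_gt0 // (anc_par tree).
Qed.

Lemma hxe_weight_balanced : balanced r par leaf hxe_weight.
Proof.
have [root_leaf|root_inner] := boolP (is_leaf r par r).
  (* A leaf root is the only node of the tree, so every path is empty. *)
  exists 0 => k; have yr : leaf k = r.
    by apply/eqP; apply: contraTT root_leaf; exact: root_leafN.
  by rewrite big_apath // yr depth_root // big_ord0.
exists (expR (- alpha)) => k.
have yr : leaf k != r by apply: contraNneq root_inner => yr; rewrite -{2}yr leaf_is_leaf.
have := hxe_telescope (fun _ => 1) yr.
rewrite big1 => [|j _]; last by rewrite subrr mulr0.
move/eqP; rewrite eq_sym subr_eq0 mulr1 => /eqP <-.
by apply: eq_bigr => j _; rewrite mulr1.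
Qed.

End HierarchicalCrossEntropy.

Theorem proposition4 (R : realType) (K : nat) (V : finType) (r : V)
  (par : V -> V) (leaf : 'I_K -> V) (alpha : R) :
  is_rooted_tree r par -> leaves_are_classes r par leaf -> 0 < alpha ->
  (exists w : V -> R,
     (forall j, j != r -> 0 < w j) /\
     (exists c : R, forall k : 'I_K, \sum_(j in apath r par leaf k) w j = c) /\
     (forall f : 'I_K -> R, pos_prob_vec f -> forall y : 'I_K,
        L_HXE r par leaf alpha f y =
        - \sum_(j in apath r par leaf y) w j * ln (node_mass par leaf f j)))
  /\ proper_scoring_rule (L_HXE r par leaf alpha).
Proof.
move=> tree leaves alpha_gt0.
have w_gt0 j : 0 < hxe_weight r par alpha j by exact: hxe_weight_gt0.
have L_eq := L_HXE_path_loss alpha tree leaves.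
split.
  exists (hxe_weight r par alpha); split=> [j _ //|]; split.
    exact: hxe_weight_balanced.
  move=> f [f_gt0 f1] y; apply: L_eq (f_gt0 y).
  by split=> // k; exact: ltW.
apply: eq_proper_scoring_rule L_eq _.
by apply: path_loss_proper (hxe_weight_balanced alpha tree leaves) => j _; exact: ltW.
Qed.
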